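(* Let $R$ be a Bézout domain. The following two conditions are equivalent: (1) $R$ is an elementary divisor ring; (2) For any nonzero elements $x,y,z\in R$, there exist elements $\lambda,a,b\in R$ such that $x+\lambda y$ divides $y(1-az)(1-b(1-z))$ in $R$.
   Context: A Bézout domain is an integral domain in which every finitely generated ideal is principal. Two matrices $A,B\in M_{m,n}(R)$ are equivalent if there exist invertible $P\in M_{m,m}(R)$, $Q\in M_{n,n}(R)$ with $B=PAQ$. A ring $R$ is an elementary divisor ring if every rectangular matrix over $R$ is equivalent to a diagonal matrix. *)

From mathcomp Require Import all_boot all_order all_algebra.
Set Implicit Arguments. Unset Strict Implicit. Unset Printing Implicit Defensive.
Import GRing.Theory.
Local Open Scope ring_scope.

Definition divides (R : comRingType) (a b : R) : Prop := exists c : R, b = c * a.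

Definition in_ideal_gen (R : comRingType) (k : nat) (f : 'I_k -> R) (x : R) : Prop :=
  exists c : 'I_k -> R, x = \sum_(i < k) c i * f i.

Definition bezout_domain (R : idomainType) : Prop :=
  forall (k : nat) (f : 'I_k -> R), exists d : R,
    forall x : R, in_ideal_gen f x <-> divides d x.

Definition is_diagonal (R : ringType) (m n : nat) (D : 'M[R]_(m, n)) : Prop :=
  forall (i : 'I_m) (j : 'I_n), (i : nat) <> (j : nat) -> D i j = 0.

Definition elementary_divisor_ring (R : comUnitRingType) : Prop :=
  forall (m n : nat) (A : 'M[R]_(m, n)),
    exists (P : 'M[R]_m) (Q : 'M[R]_n),
      P \in unitmx /\ Q \in unitmx /\ is_diagonal (P *m A *m Q).

From mathcomp Require Import all_boot all_order all_algebra.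
From mathcomp Require Import ring.
Import GRing.Theory.
Local Open Scope ring_scope.
Set Implicit Arguments. Unset Strict Implicit. Unset Printing Implicit Defensive.

(** (2) implies Kaplansky's criterion: every unimodular triple (a, b, c) admits
    p, q with p a and p b + q c comaximal.  Write b = b' d, c = c' d with d a gcd and
    e1 a + e d = 1; applying (2) to b', c' and z = a e1 gives t = b' + lam c',
    coprime to c', dividing (1 - al z)(1 - be (1 - z)).  In a Bezout domain t = r s
    with s | 1 - al z and r | 1 - be (1 - z), so s is coprime to a and r to d (as
    d | 1 - z), and a combination eps b + mu c = d s then produces p, q.
    The criterion gives every 2x2 matrix, and by induction on columns and
    transposition every matrix, an equivalent one whose corner divides all entries;
    the corner then splits off as a diagonal entry.
    Conversely, over an elementary divisor ring the entries of
    M = [[z, x'], [0, y' (1 - z)]], with x = x' g, y = y' g and x', y' comaximal,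
    generate the unit ideal, so some row p and column w satisfy p M w = 1, and
    lam, a, b are read off from p and w. *)

Definition comaximal (R : comRingType) (x y : R) := exists u v : R, u * x + v * y = 1.

Section Divisibility.
Variable R : comRingType.
Implicit Types x y z t k : R.

Lemma divides_refl x : divides x x. Proof. by exists 1; rewrite mul1r. Qed.

Lemma divides0 x : divides x 0. Proof. by exists 0; rewrite mul0r. Qed.

Lemma divides_trans x y z : divides x y -> divides y z -> divides x z.
Proof. by move=> [k ->] [l ->]; exists (l * k); rewrite mulrA. Qed.

Lemma divides_mull x y k : divides x y -> divides x (k * y).
Proof. by move=> [l ->]; exists (k * l); rewrite mulrA. Qed.

Lemma divides_mulr x y k : divides x y -> divides x (y * k).
Proof. by rewrite mulrC; apply: divides_mull. Qed.

Lemma divides_add x y z : divides x y -> divides x z -> divides x (y + z).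
Proof. by move=> [k ->] [l ->]; exists (k + l); rewrite mulrDl. Qed.

Lemma divides_sum I (r : seq I) (P : pred I) (F : I -> R) x :
  (forall i, P i -> divides x (F i)) -> divides x (\sum_(i <- r | P i) F i).
Proof. by move=> H; apply: big_ind => //; [apply: divides0 | apply: divides_add]. Qed.

Lemma comaximalC x y : comaximal x y -> comaximal y x.
Proof. by move=> [u [v H]]; exists v, u; rewrite addrC. Qed.

Lemma comaximal_dvdl x x' y : divides x' x -> comaximal x y -> comaximal x' y.
Proof. by move=> [k ->] [u [v H]]; exists (u * k), v; rewrite -H mulrA. Qed.

Lemma comaximalM x y z : comaximal x y -> comaximal x z -> comaximal x (y * z).
Proof.
move=> [u1 [v1 H1]] [u2 [v2 H2]].
exists (u1 * u2 * x + u1 * v2 * z + v1 * y * u2), (v1 * v2).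
by rewrite -[1]mul1r -{1}H1 -H2; ring.
Qed.

Lemma comaximalDr x y k : comaximal x y -> comaximal x (k * x + y).
Proof. by move=> [u [v H]]; exists (u - v * k), v; rewrite -H; ring. Qed.

Lemma dvd1BM_comaximal t x k : divides t (1 - k * x) -> comaximal t x.
Proof. by move=> [l Hl]; exists l, k; rewrite -Hl; ring. Qed.

Lemma Gauss_divides x y z : comaximal x y -> divides x (y * z) -> divides x z.
Proof.
move=> [u [v H]] [k Hk]; exists (u * z + v * k).
by rewrite -[z in LHS]mul1r -H mulrDl -(mulrA v) Hk; ring.
Qed.

End Divisibility.

Lemma sum_ord2 (V : nmodType) (F : 'I_2 -> V) : \sum_(i < 2) F i = F ord0 + F ord_max.
Proof. by rewrite big_ord_recl big_ord1; congr (_ + F _); apply: val_inj. Qed.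

Section Bezout.
Variable R : idomainType.
Hypothesis hB : bezout_domain R.

Lemma bezout_factor (x y : R) :
  exists g x' y', [/\ x = x' * g, y = y' * g & comaximal x' y'].
Proof.
pose f (i : 'I_2) := if i == ord0 then x else y.
have [g Hg] := hB f.
have [c Hc] : in_ideal_gen f g by apply/Hg; apply: divides_refl.
have [x' Hx] : divides g x.
  by apply/Hg; exists (fun i => if i == ord0 then 1 else 0); rewrite sum_ord2 /f /=; ring.
have [y' Hy] : divides g y.
  by apply/Hg; exists (fun i => if i == ord0 then 0 else 1); rewrite sum_ord2 /f /=; ring.
have [g0 | gn0] := eqVneq g 0.
  by exists 0, 1, 0; rewrite Hx Hy g0 !mulr0; split=> //; exists 1, 0; ring.
exists g, x', y'; split=> //; exists (c ord0), (c ord_max).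
apply: (mulIf gn0); rewrite mul1r {2}Hc sum_ord2 /f /= Hx Hy; ring.
Qed.

Lemma bezout_dvdM_split (t u v : R) : divides t (u * v) ->
  exists r s, [/\ t = r * s, divides s u & divides r v].
Proof.
move=> [k Hk]; have [s [r [u' [Ht Hu Cru]]]] := bezout_factor t u.
have [s0 | sn0] := eqVneq s 0.
  exists 1, 0; rewrite Ht s0 !mulr0; split=> //.
    by exists u'; rewrite Hu s0; ring.
  by exists v; ring.
exists r, s; split=> //; first by exists u'.
apply: (Gauss_divides Cru); exists k.
apply: (mulIf sn0); rewrite mulrAC -Hu Hk Ht; ring.
Qed.

End Bezout.

Definition elementary_divisor_criterion (R : idomainType) :=
  forall x y z : R, x != 0 -> y != 0 -> z != 0 ->
    exists lam a b : R, divides (x + lam * y) (y * (1 - a * z) * (1 - b * (1 - z))).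

Definition kaplansky_condition (R : comRingType) :=
  forall a b c : R, (exists e1 e2 e3, e1 * a + e2 * b + e3 * c = 1) ->
    exists p q, comaximal (p * a) (p * b + q * c).

Section Kaplansky.
Variable R : idomainType.
Hypothesis hB : bezout_domain R.

Lemma kaplansky_of_comaximal_comb (a b c eps mu : R) :
  comaximal eps c -> comaximal (eps * b + mu * c) a ->
  exists p q, comaximal (p * a) (p * b + q * c).
Proof.
move=> Cec Cwa; have [g [p [q [He Hm Cpq]]]] := bezout_factor hB eps mu.
have Cpc : comaximal p c by apply: comaximal_dvdl Cec; exists g; rewrite He mulrC.
have Cpw : comaximal p (p * b + q * c).
  by rewrite mulrC; apply/comaximalDr/comaximalM.
exists p, q; apply/comaximalC/comaximalM; first exact: comaximalC.
by apply: comaximal_dvdl Cwa; exists g; rewrite He Hm; ring.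
Qed.

Hypothesis hC : elementary_divisor_criterion R.

Lemma kaplansky_of_criterion_nonzero (a b c e1 e2 e3 : R) :
  e1 * a + e2 * b + e3 * c = 1 -> b != 0 -> c != 0 -> a * e1 != 0 ->
  exists p q, comaximal (p * a) (p * b + q * c).
Proof.
move=> He bn0 cn0 zn0.
have [d [b' [c' [Hb Hc [u [v Huv]]]]]] := bezout_factor hB b c.
have bn0' : b' != 0 by apply: contraNneq bn0 => b0; rewrite Hb b0 mul0r.
have cn0' : c' != 0 by apply: contraNneq cn0 => c0; rewrite Hc c0 mul0r.
have [lam [al [be Hdiv]]] := hC bn0' cn0' zn0.
set t := b' + lam * c' in Hdiv.
have Ctc : comaximal t c' by exists u, (v - u * lam); rewrite -Huv /t; ring.
have Htuv : divides t ((1 - al * (a * e1)) * (1 - be * (1 - a * e1))).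
  by apply: (Gauss_divides Ctc); rewrite [c' * _]mulrA.
have [r [s [Ht Hs Hr]]] := bezout_dvdM_split hB Htuv.
have Csa : comaximal s a.
  by apply: (dvd1BM_comaximal (k := al * e1)); rewrite -mulrA [e1 * a]mulrC.
have Crd : comaximal r d.
  apply: (dvd1BM_comaximal (k := be * (e2 * b' + e3 * c'))).
  suff -> : be * (e2 * b' + e3 * c') * d = be * (1 - a * e1) by [].
  by rewrite -He Hb Hc; ring.
have [eps [k Hek]] : comaximal r c.
  rewrite Hc mulrC; apply: comaximalM Crd _.
  by apply: comaximal_dvdl Ctc; exists s; rewrite Ht mulrC.
apply: (kaplansky_of_comaximal_comb (eps := eps) (mu := eps * lam + s * k * d)).
  by exists r, k; rewrite mulrC.
have -> : eps * b + (eps * lam + s * k * d) * c = d * s.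
  have Hb' : b' = r * s - lam * c' by rewrite -Ht /t; ring.
  by rewrite -[d * s]mulr1 -Hek Hb Hb' Hc; ring.
apply/comaximalC/comaximalM; apply: comaximalC => //.
by exists (e2 * b' + e3 * c'), e1; rewrite -He Hb Hc; ring.
Qed.

Lemma kaplansky_of_criterion : kaplansky_condition R.
Proof.
move=> a b c [e1 [e2 [e3 He]]].
have [b0 | bn0] := eqVneq b 0.
  apply: (@kaplansky_of_comaximal_comb _ _ _ 1 1); first by exists 1, 0; ring.
  by exists e3, e1; rewrite -[RHS]He b0; ring.
have [c0 | cn0] := eqVneq c 0.
  apply: (@kaplansky_of_comaximal_comb _ _ _ 1 0); first by exists 1, 0; ring.
  by exists e2, e1; rewrite -[RHS]He c0; ring.
have [z0 | zn0] := eqVneq (a * e1) 0.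
  have Hbc : e2 * b + e3 * c = 1 by rewrite -He [e1 * a]mulrC z0 add0r.
  apply: (kaplansky_of_comaximal_comb (eps := e2) (mu := e3)).
    by exists b, e3; rewrite -Hbc; ring.
  by exists 1, 0; rewrite Hbc; ring.
exact: kaplansky_of_criterion_nonzero He bn0 cn0 zn0.
Qed.

End Kaplansky.

Definition mx2 (R : Type) (a b c d : R) : 'M[R]_2 :=
  \matrix_(i, j) if i == ord0 then (if j == ord0 then a else b)
                 else (if j == ord0 then c else d).

Lemma ord2P (i : 'I_2) : i = ord0 \/ i = ord_max.
Proof. by case: i => [[|[|//]] Hi]; [left | right]; apply: val_inj. Qed.

Section Mx2.
Variable R : comUnitRingType.

Lemma mx2_entries (M : 'M[R]_2) :
  M = mx2 (M ord0 ord0) (M ord0 ord_max) (M ord_max ord0) (M ord_max ord_max).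
Proof.
by apply/matrixP => i j; rewrite mxE; case: (ord2P i) => ->; case: (ord2P j) => ->.
Qed.

Lemma mulmx2E m n (A : 'M[R]_(m, 2)) (B : 'M[R]_(2, n)) i j :
  (A *m B) i j = A i ord0 * B ord0 j + A i ord_max * B ord_max j.
Proof. by rewrite mxE sum_ord2. Qed.

Lemma mul_mx2 (a b c d a' b' c' d' : R) :
  mx2 a b c d *m mx2 a' b' c' d' =
  mx2 (a * a' + b * c') (a * b' + b * d') (c * a' + d * c') (c * b' + d * d').
Proof.
apply/matrixP => i j; rewrite mulmx2E !mxE.
by case: (ord2P i) => ->; case: (ord2P j) => ->.
Qed.

Lemma mx2_unit (a b c d : R) : a * d - b * c = 1 -> mx2 a b c d \in unitmx.
Proof.
move=> H; have [] // := @mulmx1_unit _ _ (mx2 a b c d) (mx2 d (- b) (- c) a).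
rewrite mul_mx2 [RHS]mx2_entries !mxE /= -H; congr mx2; ring.
Qed.

End Mx2.

Section CornerReduction.
Variable R : idomainType.

Definition dvdmx m n (d : R) (A : 'M[R]_(m, n)) := forall i j, divides d (A i j).

Lemma dvdmx_mull m n p d (B : 'M[R]_(m, n)) (A : 'M[R]_(n, p)) :
  dvdmx d A -> dvdmx d (B *m A).
Proof. by move=> H i j; rewrite mxE; apply: divides_sum => k _; apply/divides_mull/H. Qed.

Lemma dvdmx_mulr m n p d (A : 'M[R]_(m, n)) (B : 'M[R]_(n, p)) :
  dvdmx d A -> dvdmx d (A *m B).
Proof. by move=> H i j; rewrite mxE; apply: divides_sum => k _; apply/divides_mulr/H. Qed.

Lemma dvdmx_equiv m n d (A : 'M[R]_(m, n)) P Q : P \in unitmx -> Q \in unitmx ->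
  dvdmx d (P *m A *m Q) -> dvdmx d A.
Proof.
move=> hP hQ /(dvdmx_mull (invmx P)) /(dvdmx_mulr (invmx Q)).
by rewrite !mulmxA mulVmx // mul1mx -mulmxA mulmxV // mulmx1.
Qed.

Definition corner_reducible m n (A : 'M[R]_(m.+1, n.+1)) :=
  exists P Q, [/\ P \in unitmx, Q \in unitmx & dvdmx ((P *m A *m Q) ord0 ord0) A].

Lemma corner_reducible_tr m n (A : 'M[R]_(m.+1, n.+1)) :
  corner_reducible A -> corner_reducible A^T.
Proof.
move=> [P [Q [hP hQ HA]]]; exists Q^T, P^T; rewrite !unitmx_tr.
by split=> // i j; rewrite -!trmx_mul mulmxA mxE [A^T _ _]mxE; apply: HA.
Qed.

Lemma corner_reducible_mx11 (A : 'M[R]_1) : corner_reducible A.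
Proof.
exists 1%:M, 1%:M; rewrite unitmx1 mul1mx mulmx1.
by split=> // i j; rewrite !ord1; apply: divides_refl.
Qed.

Hypothesis hB : bezout_domain R.

Lemma corner_reducible_rV2 (A : 'M[R]_(1, 2)) : corner_reducible A.
Proof.
have [g [x [y [Hx Hy [u [v Huv]]]]]] := bezout_factor hB (A ord0 ord0) (A ord0 ord_max).
exists 1%:M, (mx2 u (- y) v x); rewrite unitmx1 mx2_unit; last by rewrite -Huv; ring.
rewrite mul1mx mulmx2E !mxE /=.
have -> : A ord0 ord0 * u + A ord0 ord_max * v = g.
  by rewrite Hx Hy -[RHS]mul1r -Huv; ring.
split=> // i j; have -> : i = ord0 := ord1 i.
by case: (ord2P j) => ->; [exists x | exists y].
Qed.

Lemma dvdmx_row_mx m n1 n2 d (A1 : 'M[R]_(m, n1)) (A2 : 'M[R]_(m, n2)) :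
  dvdmx d A1 -> dvdmx d A2 -> dvdmx d (row_mx A1 A2).
Proof.
move=> h1 h2 i j; rewrite -(splitK j).
by case: (split j) => j' /=; rewrite ?row_mxEl ?row_mxEr.
Qed.

Lemma unitmx_block_diag m n (X : 'M[R]_m) (Y : 'M[R]_n) :
  (block_mx X 0 0 Y \in unitmx) = (X \in unitmx) && (Y \in unitmx).
Proof. by rewrite !unitmxE det_ublock unitrM. Qed.

Hypothesis hK : kaplansky_condition R.

Lemma corner_reducible_triangular (a b c : R) : corner_reducible (mx2 a b 0 c).
Proof.
have [g [a1 [b1 [Ha Hb [s1 [t1 Hst1]]]]]] := bezout_factor hB a b.
have [h [g' [c' [Hg Hc [s2 [t2 Hst2]]]]]] := bezout_factor hB g c.
set a' := a1 * g'; set b' := b1 * g'.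
have [p [q [u [v Huv]]]] : exists p q, comaximal (p * a') (p * b' + q * c').
  apply: hK; exists (s2 * s1), (s2 * t1), t2.
  by rewrite /a' /b' -Hst2 -[g' in RHS]mulr1 -Hst1; ring.
exists (mx2 p q (- (v * c')) (u * a' + v * b')),
       (mx2 u (- (p * b' + q * c')) v (p * a')).
rewrite !mx2_unit; try by rewrite -Huv; ring.
have -> : (mx2 p q (- (v * c')) (u * a' + v * b') *m mx2 a b 0 c *m
   mx2 u (- (p * b' + q * c')) v (p * a')) ord0 ord0 = h.
  by rewrite !mul_mx2 mxE /= Ha Hb Hc Hg -[RHS]mulr1 -Huv /a' /b'; ring.
split=> // i j; rewrite mxE.
case: (ord2P i) => -> /=; case: (ord2P j) => -> /=.
- by exists a'; rewrite Ha Hg /a'; ring.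
- by exists b'; rewrite Hb Hg /b'; ring.
- exact: divides0.
- by exists c'.
Qed.

Lemma corner_reducible_mx2 (M : 'M[R]_2) : corner_reducible M.
Proof.
have [g [x [y [Hx Hy [s [t Hst]]]]]] := bezout_factor hB (M ord0 ord0) (M ord_max ord0).
pose P0 := mx2 s t (- y) x.
have hP0 : P0 \in unitmx by apply: mx2_unit; rewrite -Hst; ring.
have EM : P0 *m M = mx2 g (s * M ord0 ord_max + t * M ord_max ord_max)
                        0 (- y * M ord0 ord_max + x * M ord_max ord_max).
  rewrite [M in LHS]mx2_entries mul_mx2 Hx Hy.
  by congr mx2; [rewrite -[RHS]mul1r -Hst | ]; ring.
have [P [Q [hP hQ HT]]] := corner_reducible_triangular g
  (s * M ord0 ord_max + t * M ord_max ord_max)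
  (- y * M ord0 ord_max + x * M ord_max ord_max).
exists (P *m P0), Q; rewrite unitmx_mul hP hP0 -(mulmxA P) EM; split=> //.
by apply: (dvdmx_equiv (P := P0) (Q := 1%:M)); rewrite ?unitmx1 // mulmx1 EM.
Qed.

Lemma corner_reducible_col_ext k n :
  (forall A : 'M[R]_(k.+1, 2), corner_reducible A) ->
  (forall A : 'M[R]_(k.+1, n.+1), corner_reducible A) ->
  forall A : 'M[R]_(k.+1, n.+2), corner_reducible A.
Proof.
(* Reduce the last n.+1 columns first: their corner lands in column 1, so reducing
   columns 0 and 1 gives a corner dividing it, hence every entry. *)
move=> h2 hn A; pose A' : 'M[R]_(k.+1, 1 + n.+1) := A.
have [P1 [Q1 [hP1 hQ1 H1]]] := hn (rsubmx A').
pose Q1' : 'M[R]_(1 + n.+1) := block_mx 1%:M 0 0 Q1.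
pose B : 'M[R]_(k.+1, 2 + n) := P1 *m A' *m Q1'.
have EB : B = row_mx (P1 *m lsubmx A') (P1 *m rsubmx A' *m Q1) :> 'M_(k.+1, 1 + n.+1).
  rewrite /B /Q1' -{1}(hsubmxK A') mul_mx_row mul_row_block.
  by rewrite !mulmx1 !mulmx0 addr0 add0r.
have [P2 [Q2 [hP2 hQ2 H2]]] := h2 (lsubmx B).
pose Q2' : 'M[R]_(2 + n) := block_mx Q2 0 0 1%:M.
exists (P2 *m P1), (Q1' *m Q2'); split.
- by rewrite unitmx_mul hP2.
- have hQ1' : Q1' \in unitmx by rewrite unitmx_block_diag unitmx1.
  have hQ2' : Q2' \in unitmx by rewrite unitmx_block_diag unitmx1 andbT.
  by rewrite unitmx_mul hQ1' hQ2'.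
have -> : (P2 *m P1 *m A *m (Q1' *m Q2')) ord0 ord0 = (P2 *m lsubmx B *m Q2) ord0 ord0.
  have -> : P2 *m P1 *m A *m (Q1' *m Q2') = P2 *m B *m Q2' by rewrite /B !mulmxA.
  rewrite -{1}(hsubmxK B) mul_mx_row mul_row_block !mulmx0 addr0.
  have -> : (ord0 : 'I_n.+2) = lshift n (ord0 : 'I_2) by apply: val_inj.
  by rewrite row_mxEl.
set c' := (P2 *m lsubmx B *m Q2) ord0 ord0 in H2 *.
rewrite -[A]/A' -(hsubmxK A'); apply: (@dvdmx_row_mx _ 1%N n.+1).
  apply: (dvdmx_equiv (P := P1) (Q := 1%:M)) => //; rewrite ?unitmx1 // mulmx1 => i j.
  have -> : (P1 *m lsubmx A') i j = lsubmx B i ord0.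
    rewrite [RHS]mxE (_ : lshift n (ord0 : 'I_2) = lshift n.+1 j :> 'I_n.+2) ?EB.
      exact: (esym (@row_mxEl _ k.+1 1 n.+1 _ _ i j)).
    by apply: val_inj; rewrite /= [j]ord1.
  exact: H2.
move=> i j; apply: divides_trans (H1 i j).
have -> : (P1 *m rsubmx A' *m Q1) ord0 ord0 = lsubmx B ord0 ord_max.
  rewrite [RHS]mxE
    (_ : lshift n (ord_max : 'I_2) = rshift 1 (ord0 : 'I_n.+1) :> 'I_n.+2) ?EB.
    exact: (esym (@row_mxEr _ k.+1 1 n.+1 _ _ ord0 ord0)).
  exact: val_inj.
exact: H2.
Qed.

Lemma corner_reducible_cols k :
  (forall A : 'M[R]_(k.+1, 1), corner_reducible A) ->
  (forall A : 'M[R]_(k.+1, 2), corner_reducible A) ->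
  forall n (A : 'M[R]_(k.+1, n.+1)), corner_reducible A.
Proof. by move=> h1 h2; elim=> [|n IHn]; [exact: h1 | exact: corner_reducible_col_ext]. Qed.

Lemma corner_reducible_trV m n :
  (forall A : 'M[R]_(n.+1, m.+1), corner_reducible A) ->
  forall A : 'M[R]_(m.+1, n.+1), corner_reducible A.
Proof. by move=> h A; rewrite -[A]trmxK; apply/corner_reducible_tr/h. Qed.

Lemma corner_reducible_all m n (A : 'M[R]_(m.+1, n.+1)) : corner_reducible A.
Proof.
have rows1 := corner_reducible_cols corner_reducible_mx11 corner_reducible_rV2.
have cols1 m' : forall A' : 'M[R]_(m'.+1, 1), corner_reducible A'.
  exact: corner_reducible_trV (rows1 m').
have rows2 := corner_reducible_cols (cols1 1%N) corner_reducible_mx2.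
exact: corner_reducible_cols (cols1 m) (corner_reducible_trV (rows2 m)) n A.
Qed.

End CornerReduction.

Section Diagonalization.
Variable R : idomainType.

Lemma dvdmx_scale m n d (A : 'M[R]_(m, n)) : dvdmx d A -> exists A', A = d *: A'.
Proof.
move=> H; have H' i j : exists c, A i j == c * d by have [c ->] := H i j; exists c.
exists (\matrix_(i, j) xchoose (H' i j)); apply/matrixP => i j.
by rewrite !mxE mulrC; apply/eqP; exact: xchooseP (H' i j).
Qed.

Lemma is_diagonal_block m n (d : 'M[R]_1) (Y : 'M[R]_(m, n)) :
  is_diagonal Y -> is_diagonal (block_mx d 0 0 Y : 'M_(1 + m, 1 + n)).
Proof.
move=> hY i j; rewrite -(splitK i) -(splitK j).
case: (split i) => i'; case: (split j) => j' /= hij.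
- by case: hij; rewrite !ord1.
- by rewrite block_mxEur mxE.
- by rewrite block_mxEdl mxE.
- by rewrite block_mxEdr; apply: hY => e; apply: hij; rewrite /= e.
Qed.

Lemma corner_split m n (B : 'M[R]_(1 + m, 1 + n)) : dvdmx (B ord0 ord0) B ->
  exists L U D, [/\ L \in unitmx, U \in unitmx &
    L *m B *m U = block_mx (ulsubmx B) 0 0 D].
Proof.
move=> HB.
have Eul : ulsubmx B = (B ord0 ord0)%:M.
  by apply/matrixP => i j; rewrite !ord1 !mxE eqxx mulr1n; congr (B _ _); apply: val_inj.
have [C EC] : exists C, dlsubmx B = B ord0 ord0 *: C.
  by apply: dvdmx_scale => i j; rewrite !mxE; apply: HB.
have [U EU] : exists U, ursubmx B = B ord0 ord0 *: U.
  by apply: dvdmx_scale => i j; rewrite !mxE; apply: HB.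
exists (block_mx 1%:M 0 (- C) 1%:M), (block_mx 1%:M (- U) 0 1%:M),
       (drsubmx B - C *m ursubmx B); split.
- by rewrite unitmxE det_lblock !det1 mulr1 unitr1.
- by rewrite unitmxE det_ublock !det1 mulr1 unitr1.
rewrite -[B in LHS]submxK !mulmx_block !mul1mx !mul0mx !mulmx1 !mulmx0 !addr0.
rewrite Eul !mulNmx mul_mx_scalar mulmxN mul_scalar_mx -EC -EU.
by rewrite !addNr mul0mx add0r addrC.
Qed.

Lemma edr_of_corner_reducible :
  (forall m n (A : 'M[R]_(m.+1, n.+1)), corner_reducible A) ->
  elementary_divisor_ring R.
Proof.
move=> hC; elim=> [|m IHm] n A.
  by exists 1%:M, 1%:M; rewrite !unitmx1; split=> //; split=> //; case.
case: n A => [|n] A.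
  by exists 1%:M, 1%:M; rewrite !unitmx1; split=> //; split=> // i; case.
have [P0 [Q0 [hP0 hQ0 HA]]] := hC _ _ A.
pose B : 'M[R]_(1 + m, 1 + n) := P0 *m A *m Q0.
have [|L [U [D [hL hU EB]]]] := corner_split (B := B).
  by apply: dvdmx_mulr; apply: dvdmx_mull.
have [P [Q [hP [hQ HD]]]] := IHm n D.
exists (block_mx 1%:M 0 0 P *m L *m P0), (Q0 *m U *m block_mx 1%:M 0 0 Q).
have hP' : (block_mx 1%:M 0 0 P : 'M_(1 + m)) \in unitmx.
  by rewrite unitmx_block_diag unitmx1.
have hQ' : (block_mx 1%:M 0 0 Q : 'M_(1 + n)) \in unitmx.
  by rewrite unitmx_block_diag unitmx1.
rewrite !unitmx_mul hP' hQ' hL hU hP0 hQ0; split=> //; split=> //.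
have -> : block_mx 1%:M 0 0 P *m L *m P0 *m A *m (Q0 *m U *m block_mx 1%:M 0 0 Q)
        = block_mx 1%:M 0 0 P *m (L *m B *m U) *m block_mx 1%:M 0 0 Q.
  by rewrite /B !mulmxA.
rewrite EB !mulmx_block !mul1mx !mul0mx !mulmx0 !mulmx1 !addr0 !add0r mul0mx.
exact: is_diagonal_block.
Qed.

End Diagonalization.

(* The hypothesis says [p0 p1] M [w0; w1] = 1 for M = [[z, x], [0, y (1 - z)]]. *)
Lemma criterion_witness (R : comRingType) (g x y z p0 p1 w0 w1 : R) :
  p0 * z * w0 + p0 * x * w1 + p1 * (y * (1 - z)) * w1 = 1 ->
  exists lam a b,
    divides (x * g + lam * (y * g)) (y * g * (1 - a * z) * (1 - b * (1 - z))).
Proof.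
move=> H.
have E1 : 1 - p0 * w0 * z = w1 * (p0 * x + p1 * (y * (1 - z))).
  by rewrite -{1}H; ring.
have E2 : 1 - p1 * w1 * y * (1 - z) = (z * w0 + x * w1) * p0.
  by rewrite -{1}H; ring.
have E3 : x + p1 * w0 * z * (1 - z) * y = (z * w0 + x * w1) * (p0 * x + p1 * (y * (1 - z))).
  by rewrite -[X in X + _]mulr1 -{1}H; ring.
exists (p1 * w0 * z * (1 - z)), (p0 * w0), (p1 * w1 * y), (w1 * p0 * y).
rewrite E1 E2 (_ : x * g + _ = (x + p1 * w0 * z * (1 - z) * y) * g); last by ring.
by rewrite E3; ring.
Qed.

Section EDRCriterion.
Variable R : idomainType.
Hypothesis hE : elementary_divisor_ring R.

Lemma edr_mx2_unimodular (a b c d : R) :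
  (exists u1 u2 u3 u4, u1 * a + u2 * b + u3 * c + u4 * d = 1) ->
  exists p0 p1 w0 w1, p0 * a * w0 + p0 * b * w1 + p1 * c * w0 + p1 * d * w1 = 1.
Proof.
move=> [u1 [u2 [u3 [u4 Hu]]]].
have [P [Q [hP [hQ hD]]]] := hE (mx2 a b c d).
pose D := P *m mx2 a b c d *m Q; have ED : P *m mx2 a b c d *m Q = D by [].
clearbody D; rewrite ED in hD.
have D01 : D ord0 ord_max = 0 by apply: hD.
have D10 : D ord_max ord0 = 0 by apply: hD.
have EM i j : mx2 a b c d i j = invmx P i ord0 * D ord0 ord0 * invmx Q ord0 j
                                + invmx P i ord_max * D ord_max ord_max * invmx Q ord_max j.
  have -> : mx2 a b c d = invmx P *m D *m invmx Q.
    by rewrite -ED !mulmxA mulVmx // mul1mx -mulmxA mulmxV // mulmx1.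
  by rewrite !mulmx2E D01 D10; ring.
have [s [t Hst]] : comaximal (D ord0 ord0) (D ord_max ord_max).
  move: (EM ord0 ord0) (EM ord0 ord_max) (EM ord_max ord0) (EM ord_max ord_max).
  rewrite !mxE /= => Ea Eb Ec Ed; rewrite Ea Eb Ec Ed in Hu.
  move: (invmx P) (invmx Q) Hu => Pi Qi Hu.
  exists (u1 * Pi ord0 ord0 * Qi ord0 ord0 + u2 * Pi ord0 ord0 * Qi ord0 ord_max
          + u3 * Pi ord_max ord0 * Qi ord0 ord0 + u4 * Pi ord_max ord0 * Qi ord0 ord_max),
         (u1 * Pi ord0 ord_max * Qi ord_max ord0 + u2 * Pi ord0 ord_max * Qi ord_max ord_max
          + u3 * Pi ord_max ord_max * Qi ord_max ord0 + u4 * Pi ord_max ord_max * Qi ord_max ord_max).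
  by rewrite -Hu; ring.
exists (P ord0 ord0 + P ord_max ord0), (P ord0 ord_max + P ord_max ord_max),
       (Q ord0 ord0 * s + Q ord0 ord_max * t), (Q ord_max ord0 * s + Q ord_max ord_max * t).
rewrite -Hst (_ : s * D ord0 ord0 + t * D ord_max ord_max =
  (D ord0 ord0 + D ord_max ord0) * s + (D ord0 ord_max + D ord_max ord_max) * t).
  by rewrite -ED !mulmx2E !mxE /=; ring.
by rewrite D01 D10; ring.
Qed.

Hypothesis hB : bezout_domain R.

Lemma criterion_of_edr : elementary_divisor_criterion R.
Proof.
move=> x y z _ _ _; have [g [x' [y' [-> -> [u [v Huv]]]]]] := bezout_factor hB x y.
have [p0 [p1 [w0 [w1]]]] : exists p0 p1 w0 w1,
    p0 * z * w0 + p0 * x' * w1 + p1 * 0 * w0 + p1 * (y' * (1 - z)) * w1 = 1.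
  apply: edr_mx2_unimodular; exists 1, (u * (1 - z)), 0, v.
  have -> : 1 * z + u * (1 - z) * x' + 0 * 0 + v * (y' * (1 - z))
            = z + (1 - z) * (u * x' + v * y') by ring.
  by rewrite Huv mulr1 addrC subrK.
by rewrite mulr0 mul0r addr0 => /(criterion_witness g).
Qed.

End EDRCriterion.

Theorem proposition2p10 (R : idomainType) :
  bezout_domain R ->
  (elementary_divisor_ring R <->
   (forall x y z : R, x != 0 -> y != 0 -> z != 0 ->
      exists lam a b : R,
        divides (x + lam * y) (y * (1 - a * z) * (1 - b * (1 - z))))).
Proof.
move=> hB; split=> [hE | hC]; first exact: criterion_of_edr.
apply: edr_of_corner_reducible => m n A.
exact: corner_reducible_all hB (kaplansky_of_criterion hB hC) _ _ A.
Qed.
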